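(* Let $G=\langle V,E\rangle$ be a directed graph in which every vertex has a self-loop, let $P=\{\pi_1,\ldots,\pi_n\}$ be a plan for $n$ agents in $G$, and let $D\in\mathbb{N}$. If the ACID instance $(G,P,D)$ is solvable, then the ACID instance $(G,P,D')$ with $D'=(n-1)\cdot\|P\|$ is also solvable.
   Context: A path in $G$ is a sequence of vertices $\pi=v_1v_2\ldots v_m$ with $(v_k,v_{k+1})\in E$ for all $1\le k<m$; its length is its number of steps $m-1$. Agent $i$ has a source $s_i$ and goal $g_i$; a plan $P=\{\pi_1,\ldots,\pi_n\}$ is a set of paths where $\pi_i$ goes from $s_i$ to $g_i$. The sum-of-costs $\|P\|$ is the sum of the lengths of the paths in $P$. Two paths $v_1\ldots v_k$ and $u_1\ldots u_k$ are non-colliding if for all $1\le j<k$: $v_j\neq u_j$ and $(v_j,v_{j+1})\neq(u_{j+1},u_j)$; if the paths have different lengths, the shorter one is extended by having its agent stay at its last vertex. A plan is non-colliding if every two of its paths are non-colliding. For $d\in\mathbb{N}$, a path $\pi'$ is a $d$-delay of $\pi=v_1\ldots v_m$ if $\pi'=v_1v_1^{k_1}v_2v_2^{k_2}\ldots v_mv_m^{k_m}$ with integers $k_i\ge0$, $\sum_i k_i=d$, where $v^{k}$ denotes $k$ additional repetitions of $v$. ACID (Avoiding Collisions by Introducing Delays): given $G$, a plan $P=\{\pi_1,\ldots,\pi_n\}$ and a budget $D\in\mathbb{N}$, the instance is solvable if there exist paths $\pi'_1,\ldots,\pi'_n$ with $\pi'_i$ a $d_i$-delay of $\pi_i$, $\sum_i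 d_i\le D$, and $\{\pi'_1,\ldots,\pi'_n\}$ non-colliding. *)

From mathcomp Require Import all_boot.
Set Implicit Arguments. Unset Strict Implicit. Unset Printing Implicit Defensive.

Definition is_path (V : finType) (E : rel V) (p : seq V) : bool :=
  match p with
  | [::] => false
  | v :: p' => path E v p'
  end.

Definition path_length (V : Type) (p : seq V) : nat := (size p).-1.

(* Vertex occupied at 0-indexed time t by an agent following p (whose first
   vertex is v); past the end of p the agent stays at its last vertex. *)
Definition pos (V : Type) (v : V) (p : seq V) (t : nat) : V :=
  nth (last v p) p t.

(* Non-colliding paths v_1..v_k and u_1..u_k (shorter one extended by waiting at
   its last vertex, so k = max of the sizes): for all 1 <= j < k,
   v_j <> u_j and (v_j, v_{j+1}) <> (u_{j+1}, u_j).  (0-indexed: j < k - 1.)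
   Paths are nonempty; the empty-sequence case is irrelevant and set to True. *)
Definition non_colliding (V : eqType) (p q : seq V) : Prop :=
  match p, q with
  | v :: _, u :: _ =>
      forall j, j.+1 < maxn (size p) (size q) ->
        pos v p j != pos u q j /\
        (pos v p j, pos v p j.+1) != (pos u q j.+1, pos u q j)
  | _, _ => True
  end.

(* p' is a d-delay of p = v_1 .. v_m : p' = v_1 v_1^{k_1} ... v_m v_m^{k_m}
   with k_i >= 0 and \sum_i k_i = d. *)
Definition is_delay (V : Type) (d : nat) (p p' : seq V) : Prop :=
  exists ks : seq nat,
    [/\ size ks = size p, sumn ks = d &
        p' = flatten [seq nseq k.+1 v | '(v, k) <- zip p ks]].

Definition is_plan (V : finType) (E : rel V) (n : nat) (s g : 'I_n -> V)
    (pi : 'I_n -> seq V) : Prop :=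
  forall i, [/\ is_path E (pi i), head (s i) (pi i) = s i &
                last (s i) (pi i) = g i].

Definition sum_of_costs (V : Type) (n : nat) (pi : 'I_n -> seq V) : nat :=
  \sum_(i < n) path_length (pi i).

Definition acid_solvable (V : finType) (n : nat) (pi : 'I_n -> seq V)
    (D : nat) : Prop :=
  exists (pi' : 'I_n -> seq V) (d : 'I_n -> nat),
    [/\ forall i, is_delay (d i) (pi i) (pi' i),
        \sum_(i < n) d i <= D &
        forall i j, i != j -> non_colliding (pi' i) (pi' j)].

From mathcomp Require Import all_boot zify.
Set Implicit Arguments. Unset Strict Implicit. Unset Printing Implicit Defensive.

(* Describe a delayed plan by the wait counts ks_i of its agents and look at
   the time steps of the delayed plan.  If at some step no agent moves on to
   the next vertex of its path, deleting that step from every delayed path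
   keeps the plan non-colliding (the deleted configuration repeats the
   previous one) and lowers the total delay.  Once no such idle step is left,
   some agent advances at every step before the last arrival T, so
   T <= ||P||; agent i then waits at most T - |pi_i| steps, and the total
   delay is at most n ||P|| - ||P||. *)

Definition rem_at (T : Type) (t : nat) (s : seq T) : seq T :=
  take t s ++ drop t.+1 s.

Section RemAt.

Variable T : Type.
Implicit Types (s : seq T) (t : nat).

Lemma rem_at_cons t (x : T) s : rem_at t.+1 (x :: s) = x :: rem_at t s.
Proof. by []. Qed.

Lemma rem_at_oversize t s : size s <= t -> rem_at t s = s.
Proof. by move=> le_s_t; rewrite /rem_at take_oversize ?drop_oversize ?cats0 //; lia. Qed.

Lemma size_rem_at t s :
  size (rem_at t s) = if t < size s then (size s).-1 else size s.
Proof. by rewrite /rem_at size_cat size_take size_drop; case: ifP; lia. Qed.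

Lemma nth_rem_at (x0 : T) t s u :
  nth x0 (rem_at t s) u = nth x0 s (if u < t then u else u.+1).
Proof.
case: (ltnP t (size s)) => [lt_ts | le_st]; last first.
  by rewrite rem_at_oversize //; case: ltnP => // le_tu; rewrite !nth_default //; lia.
rewrite /rem_at nth_cat size_take lt_ts nth_drop.
case: ltnP => [lt_ut | le_tu]; first by rewrite nth_take.
by congr nth; lia.
Qed.

Lemma rem_at_cat t s1 s2 :
  rem_at t (s1 ++ s2) =
    if t < size s1 then rem_at t s1 ++ s2 else s1 ++ rem_at (t - size s1) s2.
Proof.
rewrite /rem_at take_cat drop_cat; case: (ltnP t (size s1)) => [lt_t_s1 | le_s1_t].
  case: ltnP => [|le_s1_t1]; first by rewrite catA.
  have -> : t.+1 - size s1 = 0 by lia.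
  by rewrite drop0 (drop_oversize le_s1_t1) cats0.
by rewrite ifF -?catA ?subSn //; lia.
Qed.

Lemma rem_at_nseq t m (x : T) : t < m -> rem_at t (nseq m x) = nseq m.-1 x.
Proof.
move=> lt_tm; rewrite /rem_at take_nseq ?drop_nseq -?nseqD; last by lia.
by congr nseq; lia.
Qed.

End RemAt.

Lemma map_rem_at (T U : Type) (f : T -> U) t s :
  map f (rem_at t s) = rem_at t (map f s).
Proof. by rewrite /rem_at map_cat map_take map_drop. Qed.

Definition stutters (T : Type) (s : seq T) (t : nat) : Prop :=
  forall x0, t.+1 < size s -> nth x0 s t.+1 = nth x0 s t.

Section Stutter.

Variables (T : Type) (v : T) (s : seq T) (t : nat).
Hypothesis s_t : stutters s t.

Lemma pos_stutters : pos v s t.+1 = pos v s t.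
Proof.
rewrite /pos; case: (ltnP t.+1 (size s)) => [lt_t1s | le_s_t1]; first exact: s_t.
case: (ltnP t (size s)) => [lt_ts | le_st]; last by rewrite !nth_default //; lia.
have -> : t = (size s).-1 by lia.
by rewrite nth_last nth_default //; case: (s) lt_ts.
Qed.

Lemma last_rem_at : last v (rem_at t.+1 s) = last v s.
Proof.
case: (ltnP t.+1 (size s)) => [lt_t1s | ]; last by move=> le_s_t1; rewrite rem_at_oversize.
rewrite -!nth_last nth_rem_at size_rem_at lt_t1s.
case: ltnP => [lt_t2 | le_t2]; last by congr nth; lia.
have -> : (size s).-1 = t.+1 by lia.
by rewrite s_t.
Qed.

Lemma pos_rem_at_le u : u <= t -> pos v (rem_at t.+1 s) u = pos v s u.
Proof. by move=> le_ut; rewrite /pos last_rem_at nth_rem_at ltnS le_ut. Qed.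

Lemma pos_rem_at_ge u : t <= u -> pos v (rem_at t.+1 s) u = pos v s u.+1.
Proof.
move=> le_tu; rewrite /pos last_rem_at nth_rem_at ltnS.
case: leqP => // le_ut; have -> : u = t by lia.
exact: esym pos_stutters.
Qed.

End Stutter.

Lemma non_colliding_rem_at (V : eqType) (p q : seq V) t :
  stutters p t -> stutters q t ->
  non_colliding p q -> non_colliding (rem_at t.+1 p) (rem_at t.+1 q).
Proof.
case: p => [|x p'] p_t; first by rewrite rem_at_oversize.
case: q => [|y q'] q_t; first by rewrite [rem_at _ [::]]rem_at_oversize //; case: rem_at.
move=> pq; rewrite !rem_at_cons /= -!rem_at_cons => j.
rewrite !size_rem_at => lt_j.
case: (leqP t j) => [le_tj | lt_jt].
  rewrite !(pos_rem_at_ge _ p_t, pos_rem_at_ge _ q_t) ?(leqW le_tj) //.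
  by apply: pq => /=; move: lt_j; do 2 case: ifP; lia.
rewrite !(pos_rem_at_le _ p_t, pos_rem_at_le _ q_t) ?(ltnW lt_jt) //.
by apply: pq => /=; move: lt_j; do 2 case: ifP; lia.
Qed.

Definition delayed (T : Type) (p : seq T) (ks : seq nat) : seq T :=
  flatten [seq nseq k.+1 v | '(v, k) <- zip p ks].

(* Entry t of [delay_index ks j] is j plus the index in p of the vertex
   occupied at time t by [delayed p ks] (see [delayedE]). *)
Fixpoint delay_index (ks : seq nat) (j : nat) : seq nat :=
  if ks is k :: ks' then nseq k.+1 j ++ delay_index ks' j.+1 else [::].

Fixpoint undelay (ks : seq nat) (t : nat) : seq nat :=
  if ks is k :: ks' then
    if t < k then k.-1 :: ks' else k :: undelay ks' (t - k.+1)
  else [::].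

Definition advances (f : seq nat) (t : nat) : bool :=
  (t.+1 < size f) && (nth 0 f t.+1 != nth 0 f t).

Lemma size_delay_index ks j : size (delay_index ks j) = sumn ks + size ks.
Proof. by elim: ks j => //= k ks IHks j; rewrite size_cat size_nseq IHks; lia. Qed.

Lemma delay_indexS ks j : delay_index ks j.+1 = map succn (delay_index ks j).
Proof. by elim: ks j => //= k ks IHks j; rewrite map_cat map_nseq IHks. Qed.

Lemma delay_index_ge ks j i : i \in delay_index ks j -> j <= i.
Proof.
elim: ks j => //= k ks IHks j; rewrite inE mem_cat mem_nseq.
by case/or3P=> [/eqP-> | /andP[_ /eqP->] | /IHks/ltnW].
Qed.

Lemma delayedE (T : Type) (x0 : T) p ks :
  size ks = size p -> delayed p ks = map (nth x0 p) (delay_index ks 0).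
Proof.
elim: p ks => [|v p IHp] [|k ks] //= [eq_size].
by rewrite /delayed /= -/(delayed p ks) IHp // map_cat map_nseq delay_indexS -map_comp.
Qed.

Lemma size_undelay ks t : size (undelay ks t) = size ks.
Proof. by elim: ks t => //= k ks IHks t; case: ifP => //= _; rewrite IHks. Qed.

Lemma delay_index_undelay ks j t :
  t.+1 < size (delay_index ks j) ->
  nth 0 (delay_index ks j) t.+1 = nth 0 (delay_index ks j) t ->
  delay_index (undelay ks t) j = rem_at t.+1 (delay_index ks j).
Proof.
elim: ks j t => [|k ks IHks] j t //.
have -> : delay_index (k :: ks) j = nseq k.+1 j ++ delay_index ks j.+1 by [].
rewrite [undelay _ _]/= size_cat size_nseq !nth_cat size_nseq rem_at_cat size_nseq.
case: (ltngtP t k) => [lt_tk | lt_kt | ->] lt_t1 same_t.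
- by rewrite ltnS lt_tk rem_at_nseq /=; case: (k) lt_tk.
- have [ge_t1k ge_tk] : (t.+1 < k.+1) = false /\ (t < k.+1) = false by lia.
  have sub_t1k : t.+1 - k.+1 = (t - k.+1).+1 by lia.
  rewrite ge_t1k ge_tk sub_t1k in same_t; rewrite ge_t1k sub_t1k.
  by rewrite /= IHks //; lia.
- rewrite ltnn subnn nth_nseq ltnSn /= in same_t.
  have lt0 : 0 < size (delay_index ks j.+1) by lia.
  by have := delay_index_ge (mem_nth 0 lt0); rewrite same_t ltnn.
Qed.

Lemma sumn_undelay ks t :
  t.+1 < size (delay_index ks 0) -> ~~ advances (delay_index ks 0) t ->
  (sumn (undelay ks t)).+1 = sumn ks.
Proof.
move=> lt_t1; rewrite /advances lt_t1 negbK => /eqP same_t.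
have := congr1 size (delay_index_undelay lt_t1 same_t).
by rewrite size_rem_at lt_t1; move: lt_t1; rewrite !size_delay_index size_undelay; lia.
Qed.

Lemma stutters_map (T : Type) (g : nat -> T) f t :
  ~~ advances f t -> stutters (map g f) t.
Proof.
rewrite /advances negb_and negbK -leqNgt => /orP[le_f_t1 x0 | /eqP same_t x0].
  by rewrite size_map ltnNge le_f_t1.
by rewrite size_map => lt_t1; rewrite !(nth_map 0) ?same_t //; lia.
Qed.

Section DelayedPath.

Variables (T : Type) (p : seq T) (ks : seq nat).
Hypothesis size_ks : size ks = size p.

Lemma size_delayed : size (delayed p ks) = size (delay_index ks 0).
Proof.
case: p size_ks => [|x0 p'] eq_size; first by case: ks eq_size.
by rewrite (delayedE x0 eq_size) size_map.
Qed.

Lemma stutters_delayed t :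
  ~~ advances (delay_index ks 0) t -> stutters (delayed p ks) t.
Proof.
case: p size_ks => [|x0 p'] eq_size; first by case: ks eq_size.
by rewrite (delayedE x0 eq_size); apply: stutters_map.
Qed.

Lemma delayed_undelay t :
  t.+1 < size (delay_index ks 0) -> ~~ advances (delay_index ks 0) t ->
  delayed p (undelay ks t) = rem_at t.+1 (delayed p ks).
Proof.
case: p size_ks => [|x0 p'] eq_size; first by case: ks eq_size.
move=> lt_t1; rewrite /advances lt_t1 negbK => /eqP same_t.
rewrite !(delayedE x0) ?size_undelay // delay_index_undelay //.
exact: map_rem_at.
Qed.

End DelayedPath.

Fixpoint changes (x : nat) (s : seq nat) : nat :=
  if s is y :: s' then (y != x) + changes y s' else 0.

Lemma sum_advances_cons x s N : \sum_(t < N) advances (x :: s) t <= changes x s.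
Proof.
elim: s x N => [|y s IHs] x [|N]; rewrite ?big_ord0 //.
  by rewrite big1 // => t _; rewrite /advances /= ltnS leqn0.
by rewrite big_ord_recl leq_add ?IHs.
Qed.

Lemma changes_nseq_cat x k s : changes x (nseq k x ++ s) = changes x s.
Proof. by elim: k => //= k ->; rewrite eqxx. Qed.

Lemma changes_delay_index ks j x : changes x (delay_index ks j) <= size ks.
Proof.
elim: ks j x => //= k ks IHks j x.
by rewrite changes_nseq_cat -add1n; apply: leq_add (leq_b1 _) (IHks _ _).
Qed.

Lemma sum_advances_delay_index ks N :
  \sum_(t < N) advances (delay_index ks 0) t <= (size ks).-1.
Proof.
case: ks => [|k ks]; first by rewrite big1.
rewrite [delay_index _ _]/=; apply: leq_trans (sum_advances_cons _ _ _) _.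
by rewrite changes_nseq_cat changes_delay_index.
Qed.

Section Compression.

Variables (V : eqType) (n : nat) (pi : 'I_n -> seq V).
Hypothesis pi_neq0 : forall i, pi i != [::].

Definition valid_delays (ks : 'I_n -> seq nat) : Prop :=
  (forall i, size (ks i) = size (pi i)) /\
  (forall i j, i != j ->
     non_colliding (delayed (pi i) (ks i)) (delayed (pi j) (ks j))).

Definition total_delay (ks : 'I_n -> seq nat) : nat := \sum_(i < n) sumn (ks i).

Definition horizon (ks : 'I_n -> seq nat) : nat :=
  \max_(i < n) size (delay_index (ks i) 0).

Lemma remove_idle_step ks t :
  valid_delays ks -> t.+1 < horizon ks ->
  (forall i, ~~ advances (delay_index (ks i) 0) t) ->
  exists2 ks', valid_delays ks' & total_delay ks' < total_delay ks.
Proof.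
move=> [size_ks ks_nc] lt_t1 idle.
have [i0 lt_t1_i0] : exists i0, t.+1 < size (delay_index (ks i0) 0).
  case: (pickP (fun i => t.+1 < size (delay_index (ks i) 0))) => [i0 | none].
    by exists i0.
  suff : horizon ks <= t.+1 by lia.
  by apply/bigmax_leqP => i _; rewrite leqNgt none.
pose ks' i := if t.+1 < size (delay_index (ks i) 0) then undelay (ks i) t else ks i.
have delayed_ks' i : delayed (pi i) (ks' i) = rem_at t.+1 (delayed (pi i) (ks i)).
  rewrite /ks'; case: ltnP => [lt_t1_i | ge_t1_i]; first exact: delayed_undelay.
  by rewrite rem_at_oversize // size_delayed.
have sumn_ks' i : sumn (ks' i) + (i == i0) <= sumn (ks i).
  rewrite /ks'; case: ifP => [lt_t1_i | ge_t1_i].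
    by rewrite -(sumn_undelay lt_t1_i) // -addn1 leq_add2l leq_b1.
  suff -> : (i == i0) = false by rewrite addn0.
  by apply: contraFF ge_t1_i => /eqP->.
exists ks'.
  split=> [i | i j ne_ij]; first by rewrite /ks'; case: ifP; rewrite ?size_undelay.
  rewrite !delayed_ks'; apply: non_colliding_rem_at (ks_nc _ _ ne_ij);
    exact: stutters_delayed.
rewrite /total_delay (bigD1 i0) //= [X in _ < X](bigD1 i0) //=.
have := sumn_ks' i0; rewrite eqxx addn1 => lt_i0.
rewrite -addSn leq_add // leq_sum // => i ne_i0.
by have := sumn_ks' i; rewrite (negbTE ne_i0) addn0.
Qed.

(* Double counting the advances: agent i advances at most
   [path_length (pi i)] times. *)
Lemma horizon_le_sum_of_costs ks :
  (forall i, size (ks i) = size (pi i)) ->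
  (forall t : 'I_(horizon ks).-1, exists i, advances (delay_index (ks i) 0) t) ->
  (horizon ks).-1 <= sum_of_costs pi.
Proof.
move=> size_ks busy.
have -> : (horizon ks).-1 = \sum_(t < (horizon ks).-1) 1.
  by rewrite sum_nat_const card_ord muln1.
apply: (@leq_trans (\sum_(t < (horizon ks).-1) \sum_(i < n)
                      advances (delay_index (ks i) 0) t)).
  by apply: leq_sum => t _; have [i adv_i] := busy t; rewrite (bigD1 i) //= adv_i.
rewrite exchange_big; apply: leq_sum => i _.
by rewrite /path_length -size_ks sum_advances_delay_index.
Qed.

Lemma total_delay_le ks :
  (forall i, size (ks i) = size (pi i)) ->
  (horizon ks).-1 <= sum_of_costs pi ->
  total_delay ks <= (n - 1) * sum_of_costs pi.
Proof.
set S := sum_of_costs pi => size_ks le_hS.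
suff : total_delay ks + S <= n * S by rewrite mulnBl mul1n; lia.
have -> : n * S = \sum_(i < n) S by rewrite sum_nat_const card_ord.
rewrite /total_delay {1}/S /sum_of_costs -big_split /=.
apply: leq_sum => i _; apply: leq_trans le_hS.
have := leq_bigmax (F := fun i => size (delay_index (ks i) 0)) i.
rewrite -/(horizon ks) size_delay_index size_ks /path_length.
by have := pi_neq0 i; rewrite -size_eq0; lia.
Qed.

Lemma reduce_delays ks :
  valid_delays ks -> (n - 1) * sum_of_costs pi < total_delay ks ->
  exists2 ks', valid_delays ks' & total_delay ks' < total_delay ks.
Proof.
move=> ks_ok too_long.
case: (boolP [exists t : 'I_(horizon ks).-1,
                [forall i, ~~ advances (delay_index (ks i) 0) t]]).
  case/existsP=> t /forallP idle; apply: remove_idle_step idle => //.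
  by have := ltn_ord t; lia.
move/existsPn=> busy; move: too_long; rewrite ltnNge total_delay_le //.
  by case: ks_ok.
apply: horizon_le_sum_of_costs; first by case: ks_ok.
by move=> t; have /forallPn[i] := busy t; rewrite negbK; exists i.
Qed.

Lemma bounded_delays ks :
  valid_delays ks ->
  exists2 ks', valid_delays ks' & total_delay ks' <= (n - 1) * sum_of_costs pi.
Proof.
have [m] := ubnP (total_delay ks); elim: m ks => // m IHm ks lt_m ks_ok.
case: (leqP (total_delay ks) ((n - 1) * sum_of_costs pi)) => [small | large].
  by exists ks.
have [ks' ks'_ok lt_ks'] := reduce_delays ks_ok large.
exact: IHm ks' (leq_trans lt_ks' lt_m) ks'_ok.
Qed.

End Compression.

Theorem lemma1 (V : finType) (E : rel V) (n : nat) (s g : 'I_n -> V)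
    (pi : 'I_n -> seq V) (D : nat) :
  (forall v : V, E v v) ->
  is_plan E s g pi ->
  acid_solvable pi D ->
  acid_solvable pi ((n - 1) * sum_of_costs pi).
Proof.
(* The self-loops make delayed paths paths of G; [is_delay] does not ask for
   that. *)
move=> _ plan [pi' [d [delay_d _ pi'_nc]]].
have pi_neq0 i : pi i != [::] by case: (plan i); case: (pi i).
have [ks ks_spec] := fin_all_exists delay_d.
have ks_ok : valid_delays pi ks.
  split=> [i | i j ne_ij]; first by case: (ks_spec i).
  by have := pi'_nc i j ne_ij; case: (ks_spec i) (ks_spec j) => _ _ -> [_ _ ->].
have [ks' [size_ks' ks'_nc] small] := bounded_delays pi_neq0 ks_ok.
exists (fun i => delayed (pi i) (ks' i)), (fun i => sumn (ks' i)).
by split=> // i; exists (ks' i).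
Qed.
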